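(* Let $Y_1=1$ and, for $n\ge2$, $Y_n=\lfloor (n+I)/2\rfloor$ where $I$ is a Bernoulli$(1/2)$ random variable, and let $X_n$ be the number of rounds of the associated leader election process ($X_1=0$, $X_n\overset d=X_{Y_n}+1$ with independent $Y_n$). Then for all $n\ge1$ and all $k\in\mathbb Z$, $\Pr(X_n\le k)=F(k-\log_2 n)$ exactly, where $F(x)=0$ for $x\le-1$, $F(x)=2-2^{-x}$ for $-1\le x\le0$, $F(x)=1$ for $x\ge0$. Moreover $\mathbb E X_n=\log_2 n+\phi(n)$ exactly for $n\ge1$, where $\phi(2^x)=2^{x-\lfloor x\rfloor}-(x-\lfloor x\rfloor)-1$.
   Context: The process: starting with $N_0=n$ players, $N_{k+1}$ has the law of $Y_{N_k}$ given the past, and $X_n=\min\{k:N_k=1\}$. *)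

From Stdlib Require Import Reals Lra Lia ZArith Arith.
Open Scope R_scope.

(* Law of X_n, computed from the recursion X_1 = 0,
   X_n =d X_{Y_n} + 1 with Y_n = floor((n+I)/2), I ~ Bernoulli(1/2):
   Y_n = floor(n/2) with prob 1/2, floor((n+1)/2) with prob 1/2.
   lawf fuel n j = Pr(X_n = j); fuel >= n suffices (argument halves). *)
Fixpoint lawf (fuel : nat) (n : nat) (j : nat) : R :=
  match fuel with
  | O => if Nat.eqb j 0 then 1 else 0
  | S f =>
      if Nat.leb n 1 then (if Nat.eqb j 0 then 1 else 0)
      else match j with
           | O => 0
           | S j' => / 2 * lawf f (Nat.div2 n) j' + / 2 * lawf f (Nat.div2 (S n)) j'
           end
  end.

Definition law (n j : nat) : R := lawf n n j.

Definition cdf (n : nat) (k : Z) : R :=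
  if Z.ltb k 0 then 0 else sum_f_R0 (fun j => law n j) (Z.to_nat k).

(* E X_n; X_n takes values in {0,...,n} (indeed X_n <= ceil(log2 n)) *)
Definition expect (n : nat) : R := sum_f_R0 (fun j => INR j * law n j) n.

Definition log2 (x : R) : R := ln x / ln 2.

Definition F (x : R) : R :=
  if Rle_dec x (-1) then 0
  else if Rle_dec x 0 then 2 - Rpower 2 (- x)
  else 1.

(* phi(2^x) = 2^{x - floor x} - (x - floor x) - 1, i.e. x = log2 n *)
Definition phi (n : nat) : R :=
  let x := log2 (INR n) in
  let fr := x - IZR (Int_part x) in
  Rpower 2 fr - fr - 1.

From Stdlib Require Import Reals ZArith Lra Lia Arith.
Open Scope R_scope.

(* If 2^m <= n <= 2^(m+1), then X_n takes only the two values
   m and m+1, with Pr(X_n = m+1) = t := n/2^m - 1 and Pr(X_n = m) = 1 - t.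
   This is proved by induction on m: the two halves floor(n/2) and
   ceil(n/2) lie in [2^(m-1), 2^m] and add up to n, so averaging their
   two-point laws (one round later) gives the two-point law of X_n.
   Taking m = floor(log2 n), the real x = log2 n satisfies m <= x < m+1 and
   2^(x-m) = 1 + t.  The cdf is then 0 below m, 1 - t = 2 - 2^(x-m) at m and
   1 from m+1 on, which is F(k - x); the mean is m + t, and since
   floor x = m this is x + phi(n). *)

Definition at_point (m : nat) (a : R) (j : nat) : R :=
  if Nat.eqb j m then a else 0.

Definition two_point (m : nat) (t : R) (j : nat) : R :=
  at_point m (1 - t) j + at_point (S m) t j.

Lemma div2_add_div2_succ (n : nat) : (Nat.div2 n + Nat.div2 (S n) = n)%nat.
Proof.
  pose proof (Nat.div2_odd n) as Hn; pose proof (Nat.div2_odd (S n)) as HSn.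
  rewrite Nat.odd_succ, <- Nat.negb_odd in HSn.
  destruct (Nat.odd n); simpl in *; lia.
Qed.

Lemma halves_in_range (m n : nat) : (2 ^ S m <= n <= 2 ^ S (S m))%nat ->
  (2 ^ m <= Nat.div2 n <= 2 ^ S m)%nat /\ (2 ^ m <= Nat.div2 (S n) <= 2 ^ S m)%nat.
Proof.
  intros Hn. pose proof (div2_add_div2_succ n). pose proof (Nat.div2_odd n).
  assert ((Nat.b2n (Nat.odd n) <= 1)%nat) by (destruct (Nat.odd n); simpl; lia).
  rewrite !Nat.pow_succ_r' in *. lia.
Qed.

Lemma lawf_one (fuel j : nat) : lawf fuel 1 j = at_point 0 1 j.
Proof. destruct fuel; reflexivity. Qed.

Lemma lawf_step (fuel n j : nat) : (2 <= n)%nat ->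
  lawf (S fuel) n (S j) =
  / 2 * lawf fuel (Nat.div2 n) j + / 2 * lawf fuel (Nat.div2 (S n)) j.
Proof.
  intros Hn. simpl. replace (Nat.leb n 1) with false; [reflexivity|].
  symmetry. apply Nat.leb_gt. lia.
Qed.

Lemma lawf_two_point (m : nat) : forall fuel n j,
  (2 ^ m <= n <= 2 ^ S m)%nat -> (n <= fuel)%nat ->
  lawf fuel n j = two_point m (INR n / 2 ^ m - 1) j.
Proof.
  unfold two_point, at_point.
  induction m as [|m IH]; intros fuel n j Hn Hfuel.
  - simpl in Hn. destruct fuel as [|fuel]; [lia|].
    assert (n = 1 \/ n = 2)%nat as [-> | ->] by lia.
    + simpl. destruct j as [|[|j]]; simpl; lra.
    + destruct j as [|j]; [simpl; lra|].
      rewrite lawf_step, !lawf_one by lia.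
      unfold at_point. destruct j as [|[|j]]; simpl; lra.
  - assert (Hhalves := div2_add_div2_succ n).
    destruct (halves_in_range m n Hn) as [Hfloor Hceil].
    assert (Hpos : (0 < 2 ^ m)%nat) by (apply Nat.neq_0_lt_0, Nat.pow_nonzero; lia).
    assert (Hn2 : (2 <= n)%nat) by lia.
    destruct fuel as [|fuel]; [lia|].
    destruct j as [|j].
    + simpl. replace (Nat.leb n 1) with false by (symmetry; apply Nat.leb_gt; lia). lra.
    + rewrite lawf_step by lia.
      rewrite (IH fuel (Nat.div2 n) j), (IH fuel (Nat.div2 (S n)) j) by lia.
      assert (HINR : INR n = INR (Nat.div2 n) + INR (Nat.div2 (S n)))
        by (rewrite <- plus_INR, Hhalves; reflexivity).
      rewrite HINR. simpl Nat.eqb. simpl pow.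
      assert (2 ^ m <> 0) by (apply pow_nonzero; lra).
      destruct (Nat.eqb j m), (Nat.eqb j (S m)); field; auto.
Qed.

Lemma sum_at_point (m : nat) (a : R) (K : nat) :
  sum_f_R0 (at_point m a) K = if Nat.ltb K m then 0 else a.
Proof.
  unfold at_point. induction K as [|K IH].
  - simpl. destruct m; simpl; lra.
  - cbn [sum_f_R0]. rewrite IH.
    destruct (Nat.ltb_spec K m), (Nat.ltb_spec (S K) m), (Nat.eqb_spec (S K) m);
      try lia; lra.
Qed.

Lemma Int_part_unique (x : R) (z : Z) : IZR z <= x < IZR z + 1 -> Int_part x = z.
Proof.
  intros [H1 H2]. destruct (base_Int_part x) as [H3 H4].
  assert (A : (Int_part x < z + 1)%Z) by (apply lt_IZR; rewrite plus_IZR; lra).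
  assert (B : (z < Int_part x + 1)%Z) by (apply lt_IZR; rewrite plus_IZR; lra).
  lia.
Qed.

Lemma INR_pow2 (k : nat) : INR (2 ^ k) = 2 ^ k.
Proof. rewrite pow_INR. reflexivity. Qed.

Lemma log2_bracket (m : nat) (y : R) :
  2 ^ m <= y < 2 ^ S m -> INR m <= log2 y < INR m + 1.
Proof.
  intros [Hlo Hhi].
  assert (Hln2 : 0 < ln 2) by (rewrite <- ln_1; apply ln_increasing; lra).
  assert (Hpm : 0 < 2 ^ m) by (apply pow_lt; lra).
  unfold log2. rewrite <- S_INR.
  split.
  - apply Rmult_le_reg_r with (ln 2); [exact Hln2|].
    replace (ln y / ln 2 * ln 2) with (ln y) by (field; lra).
    rewrite <- ln_pow by lra.
    destruct (Rle_lt_or_eq_dec _ _ Hlo) as [h | <-]; [left; apply ln_increasing|]; lra.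
  - apply Rmult_lt_reg_r with (ln 2); [exact Hln2|].
    replace (ln y / ln 2 * ln 2) with (ln y) by (field; lra).
    rewrite <- ln_pow by lra. apply ln_increasing; lra.
Qed.

Lemma Rpower_log2_shift (m : nat) (y : R) :
  0 < y -> Rpower 2 (log2 y - INR m) = y / 2 ^ m.
Proof.
  intros Hy.
  assert (Hln2 : 0 < ln 2) by (rewrite <- ln_1; apply ln_increasing; lra).
  unfold Rminus. rewrite Rpower_plus, Rpower_Ropp, Rpower_pow by lra.
  unfold Rpower at 1, log2.
  replace (ln y / ln 2 * ln 2) with (ln y) by (field; lra).
  rewrite exp_ln by exact Hy. reflexivity.
Qed.

Lemma two_point_cdf (m : nat) (t x : R) (k : Z) :
  INR m <= x < INR m + 1 -> Rpower 2 (x - INR m) = 1 + t ->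
  (if Z.ltb k 0 then 0 else sum_f_R0 (two_point m t) (Z.to_nat k))
  = F (IZR k - x).
Proof.
  intros Hx Hpow. unfold F.
  destruct (Z.ltb_spec k 0) as [Hk | Hk].
  - assert (IZR k <= -1) by (apply IZR_le; lia).
    assert (0 <= INR m) by apply pos_INR.
    destruct (Rle_dec (IZR k - x) (-1)); [reflexivity | lra].
  - assert (HK : IZR k = INR (Z.to_nat k))
      by (rewrite INR_IZR_INZ, Z2Nat.id by lia; reflexivity).
    rewrite HK. set (K := Z.to_nat k).
    unfold two_point. rewrite sum_plus, !sum_at_point.
    destruct (Nat.ltb_spec K m) as [h1 | h1];
      [|destruct (Nat.ltb_spec K (S m)) as [h2 | h2]].
    + assert (INR (S K) <= INR m) by (apply le_INR; lia). rewrite S_INR in *.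
      destruct (Nat.ltb_spec K (S m)); [|lia].
      destruct (Rle_dec (INR K - x) (-1)); lra.
    + replace K with m by lia.
      replace (- (INR m - x)) with (x - INR m) by ring. rewrite Hpow.
      destruct (Rle_dec (INR m - x) (-1)); [lra|].
      destruct (Rle_dec (INR m - x) 0); lra.
    + assert (INR (S m) <= INR K) by (apply le_INR; lia). rewrite S_INR in *.
      destruct (Rle_dec (INR K - x) (-1)); [lra|].
      destruct (Rle_dec (INR K - x) 0); lra.
Qed.

Lemma two_point_mean (m N : nat) (t : R) : (S m <= N)%nat ->
  sum_f_R0 (fun j => INR j * two_point m t j) N = INR m + t.
Proof.
  intros HN.
  rewrite (sum_eq _ (fun j => at_point m (INR m * (1 - t)) j
                             + at_point (S m) (INR (S m) * t) j)).
  2:{ intros j _. unfold two_point, at_point.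
      destruct (Nat.eqb_spec j m), (Nat.eqb_spec j (S m)); subst; try lia; ring. }
  rewrite sum_plus, !sum_at_point.
  destruct (Nat.ltb_spec N m), (Nat.ltb_spec N (S m)); try lia.
  rewrite S_INR. ring.
Qed.

Theorem mainTheorem6 : forall n : nat, (1 <= n)%nat ->
  (forall k : Z, cdf n k = F (IZR k - log2 (INR n))) /\
  expect n = log2 (INR n) + phi n.
Proof.
  intros n Hn.
  destruct (Nat.log2_spec n ltac:(lia)) as [Hlo Hhi].
  set (m := Nat.log2 n) in *.
  set (t := INR n / 2 ^ m - 1).
  assert (Hlaw : forall j, law n j = two_point m t j)
    by (intro j; apply lawf_two_point; lia).
  assert (Hbracket : INR m <= log2 (INR n) < INR m + 1).
  { apply log2_bracket. rewrite <- !INR_pow2.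
    split; [apply le_INR | apply lt_INR]; lia. }
  assert (Hpow : Rpower 2 (log2 (INR n) - INR m) = 1 + t).
  { rewrite Rpower_log2_shift by (apply lt_0_INR; lia). unfold t. ring. }
  split.
  - intro k. unfold cdf. rewrite (sum_eq _ _ _ (fun j _ => Hlaw j)).
    apply two_point_cdf; assumption.
  - unfold expect, phi. rewrite (sum_eq _ _ _ (fun j _ => f_equal _ (Hlaw j))).
    rewrite two_point_mean
      by (pose proof (Nat.pow_gt_lin_r 2 m ltac:(lia)); lia).
    rewrite (Int_part_unique _ (Z.of_nat m)) by (rewrite <- INR_IZR_INZ; lra).
    rewrite <- INR_IZR_INZ, Hpow. ring.
Qed.
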